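(* Let $n = 6k+r$ with integers $k\ge 0$ and $r\in\{0,1,2,3,4,5\}$. There is no balanced permutation sequence of length $n$ in each of the following cases: $r=0$ and $k\ge 2$; $r=1$ and $k\ge 11$; $r=2$ and $k\ge 3$; $r=3$ and $k\ge 8$; $r=4$ and $k\ge 4$; $r=5$ and $k\ge 9$.
   Context: Let $n$ be a positive integer, $N$ a set of $n$ players and $[n]=\{1,\ldots,n\}$ a set of $n$ items. A permutation sequence of length $n$ is an ordered tuple $(\pi_1,\ldots,\pi_n)$ of bijections $\pi_t : N\to[n]$; on day $t$ player $i$ receives item $\pi_t(i)$. For $t\in[n]$ and $i\in N$, $Z_i^t$ is the multiset $\{\pi_1(i),\ldots,\pi_t(i)\}$, and for $j\in[t]$, $Z_i^t[j]$ is the $j$-th smallest element of $Z_i^t$ (counted with multiplicity). The sequence is called balanced if for every $t\in[n]$, every $i\in N$ and every $j\in[t]$: $Z_i^t[j]\le \lceil jn/t\rceil$. *)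

From mathcomp Require Import all_boot perm.
Set Implicit Arguments. Unset Strict Implicit. Unset Printing Implicit Defensive.

(* Players N := 'I_n ; items [n] = {1,...,n} represented by 'I_n via k |-> k+1.
   A permutation sequence of length n: day d : 'I_n (day t = d+1) gives a
   bijection pi d : {perm 'I_n}; player i receives item (pi d i).+1. *)
Definition perm_seq_of_length (n : nat) := 'I_n -> {perm 'I_n}.

Definition ceildiv (a t : nat) : nat := (a + t.-1) %/ t.

Definition Z (n : nat) (pi : perm_seq_of_length n) (i : 'I_n) (t : nat) : seq nat :=
  sort leq [seq (pi d i).+1 | d : 'I_n <- enum 'I_n & (d < t)%N].

Definition Zj (n : nat) (pi : perm_seq_of_length n) (i : 'I_n) (t j : nat) : nat :=
  nth 0 (Z pi i t) j.-1.

Definition balanced (n : nat) (pi : perm_seq_of_length n) : Prop :=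
  forall (t : nat), 1 <= t <= n -> forall (i : 'I_n) (j : nat), 1 <= j <= t ->
    Zj pi i t j <= ceildiv (j * n) t.

From mathcomp Require Import all_boot perm zify.
Set Implicit Arguments. Unset Strict Implicit.

(* For player i with items a, b, c, d on
   days 1..4, balancedness at (t, j) = (2,1), (3,1), (4,1), (4,2) gives
   min(a,b) <= h, min(a,b,c) <= s, min(a,b,c,d) <= q and at least two of
   a, b, c, d at most h, where h = ceil(n/2), s = ceil(n/3), q = ceil(n/4).
   These force the weight [a > s] + [a > h] + [b > s] + [b > h] + [c > q]
   + [c > h] + 1 + [d > h] to be at most 5.  Summed over all players, each day
   being a permutation, the total weight is exactly 8n - 4h - 2s - q, so
   3n <= 4h + 2s + q.  Since 4/2 + 2/3 + 1/4 = 35/12 < 3, this fails once n is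
   large, the exact thresholds depending on n mod 6 through the ceilings. *)

Lemma leq_count_nth_sort (s : seq nat) (j c : nat) :
  0 < j <= size s -> nth 0 (sort leq s) j.-1 <= c ->
  j <= count (fun x => x <= c) s.
Proof.
move=> /andP[j_gt0 j_le_s] nth_le_c.
rewrite -(count_sort leq); set s' := sort leq s.
have s'_sorted : sorted leq s' by apply: sort_sorted; exact: leq_total.
have size_s' : size s' = size s by rewrite size_sort.
have take_le_c : all (fun x => x <= c) (take j s').
  apply/(all_nthP 0) => k; rewrite size_take size_s'.
  have -> : (if j < size s then j else size s) = j by case: ltnP; lia.
  move=> k_lt_j; rewrite nth_take //.
  apply: leq_trans nth_le_c.
  by apply: (sorted_leq_nth leq_trans leqnn 0 s'_sorted); rewrite ?inE ?size_s'; lia.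
rewrite -(cat_take_drop j s') count_cat.
move: take_le_c; rewrite all_count => /eqP ->.
rewrite size_take size_s'; case: ltnP; lia.
Qed.

Lemma sum_leq_ord (n c : nat) : \sum_(i < n) (c <= i : nat) = n - c.
Proof.
elim: n => [|n IHn]; first by rewrite big_ord0.
by rewrite big_ord_recr /= IHn; case: leqP; lia.
Qed.

Lemma sum_leq_perm (n c : nat) (p : {perm 'I_n}) :
  \sum_(i < n) (c <= p i : nat) = n - c.
Proof.
rewrite -(sum_leq_ord n c).
by rewrite (reindex_inj (h := p) (P := xpredT) (F := fun i : 'I_n => (c <= i : nat)) (@perm_inj _ p)).
Qed.

Lemma four_day_weight (q s h a b c d : nat) : q <= s <= h ->
  0 < (a < h) + (b < h) ->
  0 < (a < s) + (b < s) + (c < s) ->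
  0 < (a < q) + (b < q) + (c < q) + (d < q) ->
  1 < (a < h) + (b < h) + (c < h) + (d < h) ->
  (s <= a) + (h <= a) + ((s <= b) + (h <= b)) + ((q <= c) + (h <= c))
    + (1 + (h <= d)) <= 5.
Proof.
move=> /andP[qs sh].
case: (leqP h a); case: (leqP h b); case: (leqP h c); case: (leqP h d);
case: (leqP s a); case: (leqP s b); case: (leqP s c);
case: (leqP q a); case: (leqP q b); case: (leqP q c); case: (leqP q d);
move=> /= *; lia.
Qed.

Section FirstDays.

Variables (n' : nat) (pi : perm_seq_of_length n'.+1).
Local Notation n := n'.+1.

Lemma Z_iota (i : 'I_n) (t : nat) : t <= n ->
  [seq (pi d i).+1 | d : 'I_n <- enum 'I_n & d < t] =
  [seq (pi (inord k) i).+1 | k <- iota 0 t].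
Proof.
move=> t_le_n.
have := filter_iota_ltn 0 t_le_n; rewrite add0n => <-.
rewrite -val_enum_ord filter_map -map_comp.
by apply: eq_map => d /=; rewrite inord_val.
Qed.

Lemma balanced_count (i : 'I_n) (t j : nat) : balanced pi ->
  1 <= t <= n -> 1 <= j <= t ->
  j <= count (fun x => x <= ceildiv (j * n) t)
             [seq (pi (inord k) i).+1 | k <- iota 0 t].
Proof.
move=> bal t_range j_range; have := bal t t_range i j j_range.
rewrite /Zj /Z Z_iota; last by case/andP: t_range.
by apply: leq_count_nth_sort; rewrite size_map size_iota.
Qed.

Lemma balanced_ceil_bound : 4 <= n -> balanced pi ->
  3 * n <= 4 * ceildiv n 2 + 2 * ceildiv n 3 + ceildiv n 4.
Proof.
move=> n_ge4 bal.
set h := ceildiv n 2; set s := ceildiv n 3; set q := ceildiv n 4.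
have qs : q <= s by rewrite /q /s /ceildiv; lia.
have sh : s <= h by rewrite /h /s /ceildiv; lia.
pose day k i := pi (inord k) i.
pose weight i := (s <= day 0 i) + (h <= day 0 i) + ((s <= day 1 i) + (h <= day 1 i))
  + ((q <= day 2 i) + (h <= day 2 i)) + (1 + (h <= day 3 i)).
have weight_le5 i : weight i <= 5.
  have c21 := balanced_count (t := 2) (j := 1) i bal ltac:(lia) isT.
  have c31 := balanced_count (t := 3) (j := 1) i bal ltac:(lia) isT.
  have c41 := balanced_count (t := 4) (j := 1) i bal ltac:(lia) isT.
  have c42 := balanced_count (t := 4) (j := 2) i bal ltac:(lia) isT.
  have h42 : ceildiv (2 * n) 4 = h by rewrite /h /ceildiv; lia.
  rewrite mul1n -/h -/s -/q h42 /= !addn0 !addnA in c21 c31 c41 c42.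
  by apply: four_day_weight; rewrite ?qs ?sh.
have : \sum_(i < n) weight i <= \sum_(i < n) 5.
  by apply: leq_sum => i _; apply: weight_le5.
rewrite !big_split /= !sum_leq_perm sum_nat_const card_ord.
rewrite big_const card_ord iter_addn_0; lia.
Qed.

End FirstDays.

Theorem mainTheorem3 (k r : nat) :
  r < 6 ->
  (r = 0 /\ 2 <= k) \/ (r = 1 /\ 11 <= k) \/ (r = 2 /\ 3 <= k) \/
  (r = 3 /\ 8 <= k) \/ (r = 4 /\ 4 <= k) \/ (r = 5 /\ 9 <= k) ->
  ~ exists pi : perm_seq_of_length (6 * k + r), balanced pi.
Proof.
move=> r_lt6 large [pi bal].
have [n' n_eq] : exists n', 6 * k + r = n'.+1 by exists (6 * k + r).-1; lia.
move: pi bal; rewrite n_eq => pi bal.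
have n_ge4 : 4 <= n'.+1 by lia.
have := balanced_ceil_bound n_ge4 bal.
rewrite /ceildiv -n_eq; lia.
Qed.
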